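(* Let $P\in\mathbb{R}^{n\times n}$ be symmetric with eigenvalues $\lambda_1\ge\dots\ge\lambda_n$ and orthonormal eigenvectors $u_1,\dots,u_n$ ($Pu_s=\lambda_su_s$). Let $H\in\mathbb{R}^{n\times n}$ be symmetric, $A=P+H$, with eigenvalues $\tilde\lambda_1\ge\dots\ge\tilde\lambda_n$ and orthonormal eigenvectors $\tilde u_1,\dots,\tilde u_n$ ($A\tilde u_s=\tilde\lambda_s\tilde u_s$). Fix $t\in[n]$ such that $\lambda_t$ has multiplicity one, let $\Delta_t=\min\{|\lambda_t-\lambda_s|: s\neq t\}$, and assume $\|H\|<|\lambda_t|/2$. For $u\in\mathbb{R}^n$ and $\lambda\neq0$ define the vector $\xi(u;H,\lambda)\in\mathbb{R}^n$ by $\xi_j(u;H,\lambda)=\sum_{p\ge1}(2/|\lambda|)^p|(H^pu)_j|$. Then for all $j\in[n]$, $$\min_{\zeta\in\{-1,+1\}}|(\tilde u_t-\zeta u_t)_j|\le\left(\frac{4\|H\|^2}{\Delta_t^2}+\frac{2\|H\|}{|\lambda_t|}\right)|u_{t,j}|+2\xi_j(u_t;H,\lambda_t)+\frac{4\sqrt2\|H\|}{\Delta_t}\sum_{s\ne t}\left|\frac{\lambda_s}{\lambda_t}\right|\big(|u_{s,j}|+\xi_j(u_s;H,\lambda_t)\big).$$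
   Context: $\|\cdot\|$ denotes the spectral norm of a matrix. The series defining $\xi_j$ may take the value $+\infty$, in which case the bound is trivial. *)

(* real matrices of size n are functions nat -> nat -> R,
   only the entries with indices < n are relevant; vectors are nat -> R. *)
From Stdlib Require Export Reals.
Open Scope R_scope.

Fixpoint rsum (n : nat) (f : nat -> R) : R :=
  match n with
  | O => 0
  | S m => rsum m f + f m
  end.

Definition mv (n : nat) (M : nat -> nat -> R) (x : nat -> R) : nat -> R :=
  fun i => rsum n (fun k => M i k * x k).

Definition dot (n : nat) (x y : nat -> R) : R := rsum n (fun k => x k * y k).

Definition vnorm (n : nat) (x : nat -> R) : R := sqrt (dot n x x).

Fixpoint mpowv (n : nat) (M : nat -> nat -> R) (p : nat) (x : nat -> R) : nat -> R :=
  match p with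
  | O => x
  | S q => mv n M (mpowv n M q x)
  end.

Definition symmetric (n : nat) (M : nat -> nat -> R) : Prop :=
  forall i j, (i < n)%nat -> (j < n)%nat -> M i j = M j i.

Definition is_spectral_norm (n : nat) (M : nat -> nat -> R) (s : R) : Prop :=
  is_lub (fun r => exists x : nat -> R, vnorm n x = 1 /\ r = vnorm n (mv n M x)) s.

(* lam 0 >= ... >= lam (n-1), u s = s-th eigenvector (u s j = its j-th entry),
   orthonormal, M u_s = lam_s u_s *)
Definition ordered_eigendecomp (n : nat) (M : nat -> nat -> R)
  (lam : nat -> R) (u : nat -> nat -> R) : Prop :=
  (forall s s', (s <= s')%nat -> (s' < n)%nat -> lam s' <= lam s) /\
  (forall s s', (s < n)%nat -> (s' < n)%nat ->
      dot n (u s) (u s') = if Nat.eq_dec s s' then 1 else 0) /\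
  (forall s i, (s < n)%nat -> (i < n)%nat -> mv n M (u s) i = lam s * u s i).

(* term p >= 1 of the series xi_j(x;H,lam) = sum_{p>=1} (2/|lam|)^p |(H^p x)_j|,
   reindexed by k = p - 1 *)
Definition xi_term (n : nat) (H : nat -> nat -> R) (lam : R) (x : nat -> R) (j : nat)
  (k : nat) : R :=
  (2 / Rabs lam) ^ (S k) * Rabs (mpowv n H (S k) x j).

From Stdlib Require Import Reals Lra Lia Psatz Classical.
Open Scope R_scope.

(* Write the perturbed eigenvector [w = ut t] in the eigenbasis of [P], with
   coefficients [a_s = u_s . w], and let [mu = lamt t]. Weyl's inequality gives
   [|mu - lam t| <= |H|], so [|mu| > |lam t| / 2] and [mu] stays [Delta - |H|] away
   from the other eigenvalues of [P]. Since [(mu - lam s) a_s = u_s . H w], Parseval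
   forces [|a_s| <= 2 |H| / Delta] for [s <> t] and [1 - |a_t| <= 4 |H|^2 / Delta^2].
   Entrywise, iterating [w = (P w + H w) / mu] gives the Neumann series
   [w = sum_p H^p P w / mu^(p+1)] with [P w = sum_s lam_s a_s u_s]; the series
   [sum_p H^p u_s / mu^p] stays within [xi(u_s)] of [u_s] because
   [1 / |mu| <= 2 / |lam t|], and the remainder decays like [(|H| / |mu|)^N]. *)

(** * Finite sums and matrix-vector algebra *)

Lemma rsum_ext m f g : (forall i, (i < m)%nat -> f i = g i) -> rsum m f = rsum m g.
Proof.
  induction m as [|m IH]; simpl; intros Hfg; [reflexivity|].
  rewrite IH, (Hfg m) by (lia || intros; apply Hfg; lia). reflexivity.
Qed.

Lemma rsum_plus m f g : rsum m (fun i => f i + g i) = rsum m f + rsum m g.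
Proof. induction m; simpl; [lra|]. rewrite IHm; lra. Qed.

Lemma rsum_scal_l m a f : rsum m (fun i => a * f i) = a * rsum m f.
Proof. induction m; simpl; [lra|]. rewrite IHm; lra. Qed.

Lemma rsum_scal_r m a f : rsum m (fun i => f i * a) = rsum m f * a.
Proof. induction m; simpl; [lra|]. rewrite IHm; lra. Qed.

Lemma rsum_zero m f : (forall i, (i < m)%nat -> f i = 0) -> rsum m f = 0.
Proof.
  induction m as [|m IH]; simpl; intros Hf; [reflexivity|].
  rewrite IH, (Hf m) by (lia || intros; apply Hf; lia). lra.
Qed.

Lemma rsum_le m f g : (forall i, (i < m)%nat -> f i <= g i) -> rsum m f <= rsum m g.
Proof.
  induction m as [|m IH]; simpl; intros Hfg; [lra|].
  pose proof (IH (fun i Hi => Hfg i ltac:(lia))). pose proof (Hfg m ltac:(lia)). lra.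
Qed.

Lemma rsum_nonneg m f : (forall i, (i < m)%nat -> 0 <= f i) -> 0 <= rsum m f.
Proof.
  intros Hf. rewrite <- (rsum_zero m (fun _ => 0)) by reflexivity. now apply rsum_le.
Qed.

Lemma rsum_term_le m f s :
  (forall i, (i < m)%nat -> 0 <= f i) -> (s < m)%nat -> f s <= rsum m f.
Proof.
  induction m as [|m IH]; simpl; intros Hf Hs; [lia|].
  assert (0 <= rsum m f) by (apply rsum_nonneg; intros; apply Hf; lia).
  pose proof (Hf m ltac:(lia)).
  destruct (Nat.eq_dec s m) as [->|Hsm]; [lra|].
  pose proof (IH (fun i Hi => Hf i ltac:(lia)) ltac:(lia)). lra.
Qed.

Lemma Rabs_rsum_le m f : Rabs (rsum m f) <= rsum m (fun i => Rabs (f i)).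
Proof.
  induction m; simpl; [rewrite Rabs_R0; lra|].
  eapply Rle_trans; [apply Rabs_triang|lra].
Qed.

Lemma rsum_comm m k (f : nat -> nat -> R) :
  rsum m (fun i => rsum k (fun l => f i l)) = rsum k (fun l => rsum m (fun i => f i l)).
Proof.
  induction m; simpl; [symmetry; now apply rsum_zero|].
  now rewrite IHm, <- rsum_plus.
Qed.

Lemma rsum_indicator m (c : nat -> R) s :
  (s < m)%nat -> rsum m (fun i => c i * (if Nat.eq_dec s i then 1 else 0)) = c s.
Proof.
  induction m as [|m IH]; simpl; intros Hs; [lia|].
  destruct (Nat.eq_dec s m) as [Hsm|Hsm]; [subst s|].
  - rewrite (rsum_zero m); [ring|]. intros i Hi. destruct (Nat.eq_dec m i); [lia|ring].
  - rewrite IH by lia. ring.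
Qed.

Lemma rsum_split_at m f t : (t < m)%nat ->
  rsum m f = f t + rsum m (fun s => if Nat.eq_dec s t then 0 else f s).
Proof.
  induction m as [|m IH]; simpl; intros Ht; [lia|].
  destruct (Nat.eq_dec m t) as [->|Hmt]; [|rewrite IH by lia; lra].
  rewrite (rsum_ext t (fun s => if Nat.eq_dec s t then 0 else f s) f).
  - destruct (Nat.eq_dec t t); [lra|congruence].
  - intros i Hi. destruct (Nat.eq_dec i t); [lia|reflexivity].
Qed.

Lemma rsum_truncate m k f :
  (k <= m)%nat -> (forall i, (k <= i < m)%nat -> f i = 0) -> rsum m f = rsum k f.
Proof.
  induction m as [|m IH]; intros Hk Hf; [now replace k with 0%nat by lia|].
  destruct (Nat.eq_dec k (S m)) as [->|Hkm]; [reflexivity|].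
  simpl. rewrite IH, Hf by (lia || intros; apply Hf; lia). ring.
Qed.

Lemma rsum_shift N f : rsum (S N) f = f 0%nat + rsum N (fun k => f (S k)).
Proof. induction N; simpl in *; [ring|]. rewrite IHN. ring. Qed.

Lemma rsum_sum_f_R0 N f : rsum (S N) f = sum_f_R0 f N.
Proof. induction N; simpl in *; [ring|]. now rewrite IHN. Qed.

Lemma mv_ext n M x y i : (forall l, (l < n)%nat -> x l = y l) -> mv n M x i = mv n M y i.
Proof. intros Hxy. unfold mv. apply rsum_ext. intros l Hl. now rewrite Hxy. Qed.

Lemma dot_ext n x y x' y' :
  (forall l, (l < n)%nat -> x l = x' l) -> (forall l, (l < n)%nat -> y l = y' l) ->
  dot n x y = dot n x' y'.
Proof. intros Hx Hy. unfold dot. apply rsum_ext. intros l Hl. now rewrite Hx, Hy. Qed.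

Lemma dot_comm n x y : dot n x y = dot n y x.
Proof. unfold dot. apply rsum_ext. intros; ring. Qed.

Lemma dot_plus_r n x y z : dot n x (fun l => y l + z l) = dot n x y + dot n x z.
Proof. unfold dot. rewrite <- rsum_plus. apply rsum_ext. intros; ring. Qed.

Lemma dot_scal_r n x a y : dot n x (fun l => a * y l) = a * dot n x y.
Proof. unfold dot. rewrite <- rsum_scal_l. apply rsum_ext. intros; ring. Qed.

Lemma dot_scal n a b x y :
  dot n (fun l => a * x l) (fun l => b * y l) = a * b * dot n x y.
Proof. unfold dot. rewrite <- rsum_scal_l. apply rsum_ext. intros; ring. Qed.

Lemma dot_expand n x y c :
  dot n (fun l => x l + c * y l) (fun l => x l + c * y l)
  = dot n x x + 2 * c * dot n x y + c ^ 2 * dot n y y.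
Proof. unfold dot. rewrite <- !rsum_scal_l, <- !rsum_plus. apply rsum_ext. intros; ring. Qed.

Lemma dot_rsum_r n m (y c : nat -> R) (z : nat -> nat -> R) :
  dot n y (fun l => rsum m (fun s => c s * z s l)) = rsum m (fun s => c s * dot n y (z s)).
Proof.
  unfold dot.
  rewrite (rsum_ext n _ (fun l => rsum m (fun s => c s * (y l * z s l)))).
  - rewrite rsum_comm. apply rsum_ext. intros. now rewrite rsum_scal_l.
  - intros. rewrite <- rsum_scal_l. apply rsum_ext. intros; ring.
Qed.

Lemma dot_nonneg n x : 0 <= dot n x x.
Proof. unfold dot. apply rsum_nonneg. intros; nra. Qed.

Lemma sq_entry_le_dot n x j : (j < n)%nat -> x j ^ 2 <= dot n x x.
Proof.
  intros Hj. replace (x j ^ 2) with (x j * x j) by ring.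
  apply (rsum_term_le n (fun k => x k * x k)); [intros; nra|exact Hj].
Qed.

Lemma Rabs_entry_le_vnorm n x j : (j < n)%nat -> Rabs (x j) <= vnorm n x.
Proof.
  intros Hj. rewrite <- sqrt_Rsqr_abs. apply sqrt_le_1_alt. unfold Rsqr.
  pose proof (sq_entry_le_dot n x j Hj). lra.
Qed.

Lemma dot_self_eq0 n x : dot n x x = 0 -> forall l, (l < n)%nat -> x l = 0.
Proof. intros Hx l Hl. pose proof (sq_entry_le_dot n x l Hl). rewrite Hx in *. nra. Qed.

Lemma mv_rsum n M m (c : nat -> R) (z : nat -> nat -> R) i :
  mv n M (fun l => rsum m (fun s => c s * z s l)) i = rsum m (fun s => c s * mv n M (z s) i).
Proof. exact (dot_rsum_r n m (M i) c z). Qed.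

Lemma mv_lincomb n M a b x y i :
  mv n M (fun l => a * x l + b * y l) i = a * mv n M x i + b * mv n M y i.
Proof. unfold mv. rewrite <- !rsum_scal_l, <- rsum_plus. apply rsum_ext. intros; ring. Qed.

Lemma mv_scal n M a x i : mv n M (fun l => a * x l) i = a * mv n M x i.
Proof. unfold mv. rewrite <- rsum_scal_l. apply rsum_ext. intros; ring. Qed.

Lemma mv_plus_matrix n M N x i :
  mv n (fun i j => M i j + N i j) x i = mv n M x i + mv n N x i.
Proof. unfold mv. rewrite <- rsum_plus. apply rsum_ext. intros; ring. Qed.

Lemma mv_symmetric n M x y : symmetric n M -> dot n x (mv n M y) = dot n (mv n M x) y.
Proof.
  intros HM. unfold dot, mv.
  rewrite (rsum_ext n _ (fun k => rsum n (fun l => x k * M k l * y l))).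
  - rewrite rsum_comm. apply rsum_ext. intros l Hl. rewrite <- rsum_scal_r.
    apply rsum_ext. intros k Hk. rewrite HM by assumption. ring.
  - intros. rewrite <- rsum_scal_l. apply rsum_ext. intros; ring.
Qed.

Lemma mpowv_ext n M p x y i :
  (forall l, (l < n)%nat -> x l = y l) -> (i < n)%nat -> mpowv n M p x i = mpowv n M p y i.
Proof.
  intros Hxy Hi. destruct p as [|p]; simpl; [now apply Hxy|].
  apply mv_ext. induction p; simpl; intros l Hl; [now apply Hxy|].
  now apply mv_ext.
Qed.

Lemma mpowv_mv n M p x i : mpowv n M p (mv n M x) i = mv n M (mpowv n M p x) i.
Proof. revert i; induction p; intros; simpl; [reflexivity|]. now apply mv_ext. Qed.

Lemma mpowv_rsum n M p m (c : nat -> R) (z : nat -> nat -> R) i :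
  mpowv n M p (fun l => rsum m (fun s => c s * z s l)) i
  = rsum m (fun s => c s * mpowv n M p (z s) i).
Proof.
  revert i; induction p; intros; simpl; [reflexivity|].
  rewrite (mv_ext n M _ (fun l => rsum m (fun s => c s * mpowv n M p (z s) l))) by auto.
  apply mv_rsum.
Qed.

Lemma mpowv_lincomb n M p a b x y i :
  mpowv n M p (fun l => a * x l + b * y l) i = a * mpowv n M p x i + b * mpowv n M p y i.
Proof.
  revert i; induction p; intros; simpl; [reflexivity|].
  rewrite (mv_ext n M _ (fun l => a * mpowv n M p x l + b * mpowv n M p y l)) by auto.
  apply mv_lincomb.
Qed.

(** * Linear dependence and orthonormal bases *)

(* [c] is a nontrivial linear relation between the vectors [v 0], ..., [v (m-1)]
   of length [k] ([v i r] is the [r]-th entry of the [i]-th vector). *)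
Definition null_combination (k m : nat) (v : nat -> nat -> R) (c : nat -> R) : Prop :=
  (exists i, (i < m)%nat /\ c i <> 0) /\
  forall r, (r < k)%nat -> rsum m (fun i => c i * v i r) = 0.

Lemma null_combination_pivot_last k m v :
  (forall w, exists c, null_combination k m w c) -> v m k <> 0 ->
  exists c, null_combination (S k) (S m) v c.
Proof.
  intros IH Hpiv.
  destruct (IH (fun i r => v i r - v i k / v m k * v m r)) as [d [[i0 [Hi0 Hd0]] Hd]].
  exists (fun i => if Nat.eq_dec i m then - rsum m (fun i => d i * v i k) / v m k else d i).
  split; [exists i0; split; [lia|]; destruct (Nat.eq_dec i0 m); [lia|assumption]|].
  intros r Hr. simpl. destruct (Nat.eq_dec m m) as [_|]; [|congruence].
  rewrite (rsum_ext m _ (fun i => d i * (v i r - v i k / v m k * v m r)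
                                  + d i * v i k * (v m r / v m k))).
  2:{ intros i Hi. destruct (Nat.eq_dec i m); [lia|]. field. assumption. }
  rewrite rsum_plus, rsum_scal_r.
  destruct (Nat.eq_dec r k) as [->|Hrk].
  - rewrite rsum_zero; [field; assumption|]. intros i _. field. assumption.
  - rewrite Hd by lia. field. assumption.
Qed.

(* Adding row [i0] to the last row moves a pivot into the last position. *)
Lemma null_combination_row_add k m v i0 c :
  (i0 < m)%nat ->
  null_combination k (S m) (fun i r => v i r + (if Nat.eq_dec m i then v i0 r else 0)) c ->
  null_combination k (S m) v (fun i => c i + (if Nat.eq_dec i0 i then c m else 0)).
Proof.
  intros Hi0 [[i1 [Hi1 Hc1]] Hc]. split.
  - apply NNPP. intros Hnone.
    assert (Hzero : forall i, (i < S m)%nat -> c i + (if Nat.eq_dec i0 i then c m else 0) = 0)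
      by (intros i Hi; apply NNPP; intros Hne; apply Hnone; eauto).
    assert (Hcm : c m = 0).
    { specialize (Hzero m ltac:(lia)). destruct (Nat.eq_dec i0 m); [lia|lra]. }
    apply Hc1. specialize (Hzero i1 Hi1). destruct (Nat.eq_dec i0 i1); lra.
  - intros r Hr.
    transitivity (rsum (S m) (fun i => c i * (v i r + (if Nat.eq_dec m i then v i0 r else 0))));
      [|now apply Hc].
    rewrite (rsum_ext _ (fun i => (c i + (if Nat.eq_dec i0 i then c m else 0)) * v i r)
               (fun i => c i * v i r + c m * v i r * (if Nat.eq_dec i0 i then 1 else 0)))
      by (intros i _; destruct (Nat.eq_dec i0 i); ring).
    rewrite (rsum_ext _ (fun i => c i * (v i r + (if Nat.eq_dec m i then v i0 r else 0)))
               (fun i => c i * v i r + c i * v i0 r * (if Nat.eq_dec m i then 1 else 0)))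
      by (intros i _; destruct (Nat.eq_dec m i); ring).
    rewrite !rsum_plus, !(rsum_indicator _ (fun i => _ * _)) by lia. ring.
Qed.

(* Gaussian elimination on the last coordinate. *)
Lemma exists_null_combination k : forall m v, (k < m)%nat -> exists c, null_combination k m v c.
Proof.
  induction k as [|k IH]; intros m v Hm.
  - exists (fun _ => 1). split; [exists 0%nat; split; [lia|lra]|intros; lia].
  - destruct m as [|m]; [lia|].
    destruct (Req_dec (v m k) 0) as [Hlast|Hlast];
      [|apply null_combination_pivot_last; auto with arith].
    destruct (classic (exists i0, (i0 < S m)%nat /\ v i0 k <> 0)) as [[i0 [Hi0 Hpiv]]|Hcol].
    + assert (i0 <> m) by (intros ->; contradiction).
      destruct (null_combination_pivot_last k m
                  (fun i r => v i r + (if Nat.eq_dec m i then v i0 r else 0)))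
        as [c Hc]; [auto with arith|simpl; destruct (Nat.eq_dec m m); [lra|congruence]|].
      eexists. apply (null_combination_row_add _ _ _ i0); [lia|exact Hc].
    + destruct (IH (S m) v ltac:(lia)) as [c [Hc1 Hc]]. exists c. split; [exact Hc1|].
      intros r Hr. destruct (Nat.eq_dec r k) as [->|Hrk]; [|apply Hc; lia].
      apply rsum_zero. intros i Hi.
      replace (v i k) with 0 by (apply NNPP; intros Hne; apply Hcol; eauto). ring.
Qed.

Definition orthonormal (n : nat) (u : nat -> nat -> R) : Prop :=
  forall s s', (s < n)%nat -> (s' < n)%nat ->
    dot n (u s) (u s') = if Nat.eq_dec s s' then 1 else 0.

Section OrthonormalBasis.

Variables (n : nat) (u : nat -> nat -> R).
Hypothesis Hu : orthonormal n u.

Lemma dot_basis_combination (c : nat -> R) s : (s < n)%nat ->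
  dot n (u s) (fun l => rsum n (fun i => c i * u i l)) = c s.
Proof.
  intros Hs. rewrite dot_rsum_r.
  rewrite (rsum_ext _ _ (fun i => c i * (if Nat.eq_dec s i then 1 else 0)))
    by (intros; now rewrite Hu).
  now apply rsum_indicator.
Qed.

(* [u 0, ..., u (n-1), x] are linearly dependent, and orthonormality forces the
   coefficient of [x] in a relation to be nonzero. *)
Lemma orthonormal_expansion x l : (l < n)%nat ->
  x l = rsum n (fun s => dot n (u s) x * u s l).
Proof.
  intros Hl.
  destruct (exists_null_combination n (S n)
              (fun i r => if Nat.eq_dec i n then x r else u i r) ltac:(lia))
    as [c [[i1 [Hi1 Hc1]] Hc]].
  set (y := fun l => rsum n (fun i => c i * u i l)).
  assert (Hy : forall r, (r < n)%nat -> y r + c n * x r = 0).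
  { intros r Hr. rewrite <- (Hc r Hr). simpl. destruct (Nat.eq_dec n n); [|congruence].
    f_equal. apply rsum_ext. intros i Hi. destruct (Nat.eq_dec i n); [lia|reflexivity]. }
  destruct (Req_dec (c n) 0) as [Hcn|Hcn].
  - exfalso. assert (i1 <> n) by (intros ->; contradiction).
    apply Hc1. rewrite <- (dot_basis_combination c i1) by lia. fold y.
    unfold dot. apply rsum_zero. intros r Hr. specialize (Hy r Hr). rewrite Hcn in Hy. nra.
  - assert (Hx : forall r, (r < n)%nat -> x r = - / c n * y r)
      by (intros r Hr; specialize (Hy r Hr); field_simplify_eq; lra).
    rewrite Hx by assumption. unfold y at 1. rewrite <- rsum_scal_l.
    apply rsum_ext. intros s Hs.
    rewrite (dot_ext n (u s) x (u s) (fun r => - / c n * y r)), dot_scal_r by auto.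
    unfold y. rewrite dot_basis_combination by assumption. ring.
Qed.

Lemma parseval x y : dot n x y = rsum n (fun s => dot n (u s) x * dot n (u s) y).
Proof.
  rewrite (dot_ext n x y (fun l => rsum n (fun s => dot n (u s) x * u s l)) y)
    by (auto using orthonormal_expansion).
  rewrite dot_comm, dot_rsum_r. apply rsum_ext. intros. now rewrite (dot_comm n y).
Qed.

Lemma quadratic_form_eigen M lam x :
  (forall s i, (s < n)%nat -> (i < n)%nat -> mv n M (u s) i = lam s * u s i) ->
  dot n x (mv n M x) = rsum n (fun s => lam s * dot n (u s) x ^ 2).
Proof.
  intros HM.
  rewrite (dot_ext n x (mv n M x) x (fun i => rsum n (fun s => (dot n (u s) x * lam s) * u s i))).
  - rewrite dot_rsum_r. apply rsum_ext. intros. rewrite dot_comm. ring.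
  - reflexivity.
  - intros i Hi.
    rewrite (mv_ext n M x (fun l => rsum n (fun s => dot n (u s) x * u s l)))
      by (auto using orthonormal_expansion).
    rewrite mv_rsum. apply rsum_ext. intros. rewrite HM by assumption. ring.
Qed.

End OrthonormalBasis.

(** * Spectral norm and Weyl's inequality *)

Section SpectralNorm.

Variables (n : nat) (H : nat -> nat -> R) (h : R).
Hypothesis HH : is_spectral_norm n H h.

Lemma spectral_norm_unit_bound x : dot n x x = 1 ->
  0 <= h /\ dot n (mv n H x) (mv n H x) <= h ^ 2.
Proof.
  intros Hx.
  assert (Hle : vnorm n (mv n H x) <= h).
  { apply (proj1 HH). exists x. split; [|reflexivity]. unfold vnorm. now rewrite Hx, sqrt_1. }
  unfold vnorm in Hle. pose proof (sqrt_pos (dot n (mv n H x) (mv n H x))).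
  rewrite <- (sqrt_sqrt (dot n (mv n H x) (mv n H x))) by apply dot_nonneg.
  split; nra.
Qed.

Lemma spectral_norm_sq_bound x : dot n (mv n H x) (mv n H x) <= h ^ 2 * dot n x x.
Proof.
  destruct (Req_dec (dot n x x) 0) as [Hx0|Hx0].
  - rewrite Hx0. unfold dot at 1. rewrite rsum_zero; [lra|]. intros i Hi.
    rewrite (mv_ext n H x (fun l => 0 * x l)), mv_scal by (intros; rewrite (dot_self_eq0 n x Hx0) by auto; ring).
    ring.
  - pose proof (dot_nonneg n x). set (d := dot n x x) in *.
    assert (Hsd : sqrt d * sqrt d = d) by (apply sqrt_sqrt; lra).
    assert (Hsd0 : 0 < sqrt d) by (apply sqrt_lt_R0; lra).
    set (a := / sqrt d).
    assert (Ha : a * a * d = 1).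
    { rewrite <- Hsd. unfold a. field. lra. }
    destruct (spectral_norm_unit_bound (fun l => a * x l)) as [_ Hy]; [rewrite dot_scal; exact Ha|].
    rewrite (dot_ext n _ _ (fun l => a * mv n H x l) (fun l => a * mv n H x l)), dot_scal in Hy
      by (intros; apply mv_scal).
    apply Rmult_le_compat_l with (r := d) in Hy; [|lra].
    replace (d * (a * a * dot n (mv n H x) (mv n H x))) with (a * a * d * dot n (mv n H x) (mv n H x)) in Hy by ring.
    rewrite Ha in Hy. lra.
Qed.

Lemma mpowv_sq_bound p x :
  dot n (mpowv n H p x) (mpowv n H p x) <= h ^ (2 * p) * dot n x x.
Proof.
  induction p as [|p IH]; simpl mpowv; [simpl; lra|].
  eapply Rle_trans; [apply spectral_norm_sq_bound|].
  replace (h ^ (2 * S p)) with (h ^ 2 * h ^ (2 * p)) by (rewrite <- pow_add; f_equal; lia).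
  rewrite Rmult_assoc. apply Rmult_le_compat_l; [nra|exact IH].
Qed.

(* Expand [|H x - h x|^2 >= 0] and [|H x + h x|^2 >= 0]. *)
Lemma quadratic_form_bound x : 0 <= h -> Rabs (dot n x (mv n H x)) <= h * dot n x x.
Proof.
  intros Hh. pose proof (spectral_norm_sq_bound x) as HB. pose proof (dot_nonneg n x).
  destruct (Req_dec h 0) as [Hh0|Hh0].
  - rewrite Hh0 in *. pose proof (dot_nonneg n (mv n H x)).
    assert (HHx : dot n (mv n H x) (mv n H x) = 0) by nra.
    rewrite (dot_ext n x (mv n H x) x (fun l => 0 * x l)), dot_scal_r
      by (intros; try rewrite (dot_self_eq0 n _ HHx) by assumption; ring).
    rewrite Rmult_0_l, Rabs_R0. lra.
  - pose proof (dot_nonneg n (fun l => mv n H x l + h * x l)) as Hplus.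
    pose proof (dot_nonneg n (fun l => mv n H x l + - h * x l)) as Hminus.
    rewrite dot_expand, (dot_comm n (mv n H x) x) in Hplus, Hminus.
    apply Rabs_le. split; nra.
Qed.
End SpectralNorm.

(* Courant-Fischer: a nonzero [x] in the span of [u1 0, ..., u1 t] orthogonal to
   [u2 0, ..., u2 (t-1)] has Rayleigh quotient at least [lam1 t] for [M1] and at
   most [lam2 t] for [M2]. *)
Lemma weyl_monotonicity n M1 M2 lam1 u1 lam2 u2 h t :
  ordered_eigendecomp n M1 lam1 u1 -> ordered_eigendecomp n M2 lam2 u2 -> (t < n)%nat ->
  (forall x, dot n x (mv n M1 x) - h * dot n x x <= dot n x (mv n M2 x)) ->
  lam1 t - h <= lam2 t.
Proof.
  intros [Hord1 [Hon1 Hev1]] [Hord2 [Hon2 Hev2]] Ht Hq.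
  destruct (exists_null_combination t (S t) (fun i r => dot n (u2 r) (u1 i)) ltac:(lia))
    as [c [[i1 [Hi1 Hc1]] Hc]].
  set (c' := fun i => if Nat.ltb i (S t) then c i else 0).
  set (x := fun l => rsum n (fun i => c' i * u1 i l)).
  assert (Hcoef1 : forall s, (s < n)%nat -> dot n (u1 s) x = c' s)
    by (intros; apply dot_basis_combination; assumption).
  assert (Horth : forall r, (r < t)%nat -> dot n (u2 r) x = 0).
  { intros r Hr. unfold x. rewrite dot_rsum_r.
    rewrite (rsum_truncate n (S t)) by (lia || intros i Hi; unfold c';
                                        rewrite (proj2 (Nat.ltb_ge i (S t))) by lia; ring).
    rewrite <- (Hc r Hr). apply rsum_ext. intros i Hi.
    unfold c'. rewrite (proj2 (Nat.ltb_lt i (S t))) by lia. ring. }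
  assert (Hnorm : dot n x x = rsum n (fun s => c' s ^ 2)).
  { rewrite (parseval n u1 Hon1). apply rsum_ext. intros. rewrite Hcoef1 by assumption. ring. }
  assert (Hpos : 0 < dot n x x).
  { rewrite Hnorm. apply Rlt_le_trans with (c' i1 ^ 2).
    - unfold c'. rewrite (proj2 (Nat.ltb_lt i1 (S t))) by lia. nra.
    - apply (rsum_term_le n (fun s => c' s ^ 2)); [intros; apply pow2_ge_0|lia]. }
  assert (H1 : lam1 t * dot n x x <= dot n x (mv n M1 x)).
  { rewrite (quadratic_form_eigen n u1 Hon1 M1 lam1), Hnorm, <- rsum_scal_l by assumption.
    apply rsum_le. intros s Hs. rewrite Hcoef1 by assumption.
    destruct (Compare_dec.le_lt_dec s t).
    - apply Rmult_le_compat_r; [apply pow2_ge_0|apply Hord1; lia].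
    - unfold c'. rewrite (proj2 (Nat.ltb_ge s (S t))) by lia. lra. }
  assert (H2 : dot n x (mv n M2 x) <= lam2 t * dot n x x).
  { rewrite (quadratic_form_eigen n u2 Hon2 M2 lam2), (parseval n u2 Hon2), <- rsum_scal_l
      by assumption.
    apply rsum_le. intros r Hr. destruct (Compare_dec.le_lt_dec t r).
    - replace (dot n (u2 r) x * dot n (u2 r) x) with (dot n (u2 r) x ^ 2) by ring.
      apply Rmult_le_compat_r; [apply pow2_ge_0|apply Hord2; lia].
    - rewrite Horth by assumption. lra. }
  specialize (Hq x). nra.
Qed.

Lemma weyl_perturbation n P H h lam u lamt ut t :
  ordered_eigendecomp n P lam u ->
  ordered_eigendecomp n (fun i j => P i j + H i j) lamt ut ->
  is_spectral_norm n H h -> 0 <= h -> (t < n)%nat ->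
  Rabs (lamt t - lam t) <= h.
Proof.
  intros HP HA HH Hh Ht.
  assert (Hsplit : forall x, dot n x (mv n (fun i j => P i j + H i j) x)
                             = dot n x (mv n P x) + dot n x (mv n H x)).
  { intros x. rewrite <- dot_plus_r. apply dot_ext; [reflexivity|]. intros. apply mv_plus_matrix. }
  assert (HQ : forall x, - (h * dot n x x) <= dot n x (mv n H x) <= h * dot n x x).
  { intros x. pose proof (quadratic_form_bound n H h HH x Hh) as Hq.
    unfold Rabs in Hq. destruct (Rcase_abs (dot n x (mv n H x))); lra. }
  apply Rabs_le. split.
  - enough (lam t - h <= lamt t) by lra.
    apply (weyl_monotonicity n P _ lam u lamt ut h t HP HA Ht).
    intros x. rewrite Hsplit. specialize (HQ x). lra.
  - enough (lamt t - h <= lam t) by lra.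
    apply (weyl_monotonicity n _ P lamt ut lam u h t HA HP Ht).
    intros x. rewrite Hsplit. specialize (HQ x). lra.
Qed.

(** * Series estimates *)

Lemma Rabs_le_of_sq_le x b : x ^ 2 <= b ^ 2 -> 0 <= b -> Rabs x <= b.
Proof. intros. apply Rabs_le. split; nra. Qed.

Lemma le_of_le_plus_geometric X B q :
  0 <= q < 1 -> (forall N, X <= B + q ^ S N) -> X <= B.
Proof.
  intros Hq HN. destruct (Rle_lt_dec X B) as [|Hlt]; [assumption|exfalso].
  destruct (pow_lt_1_zero q ltac:(rewrite Rabs_pos_eq; lra) (X - B) ltac:(lra)) as [N HN'].
  specialize (HN' (S N) ltac:(lia)). specialize (HN N).
  rewrite Rabs_pos_eq in HN' by (apply pow_le; lra). lra.
Qed.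

Lemma partial_sum_le f l N :
  infinite_sum f l -> (forall k, 0 <= f k) -> rsum N f <= l.
Proof.
  intros Hf Hpos. destruct N as [|N].
  - pose proof (sum_incr f 0 l Hf Hpos). specialize (Hpos 0%nat). simpl in *. lra.
  - rewrite rsum_sum_f_R0. now apply sum_incr.
Qed.

Lemma xi_term_nonneg n H lam x j k : 0 <= xi_term n H lam x j k.
Proof.
  unfold xi_term. apply Rmult_le_pos; [apply pow_le|apply Rabs_pos].
  unfold Rdiv. apply Rmult_le_pos; [lra|].
  destruct (Req_dec (Rabs lam) 0) as [E|E]; [rewrite E, Rinv_0; lra|].
  apply Rlt_le, Rinv_0_lt_compat. pose proof (Rabs_pos lam). lra.
Qed.

Lemma xi_nonneg n H lam x j xi : infinite_sum (xi_term n H lam x j) xi -> 0 <= xi.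
Proof.
  intros Hxi. apply (partial_sum_le _ _ 0 Hxi). intros. apply xi_term_nonneg.
Qed.

Lemma neumann_partial_sum_deviation n H lam mu x j xi N :
  0 < Rabs mu -> / Rabs mu <= 2 / Rabs lam ->
  infinite_sum (xi_term n H lam x j) xi ->
  Rabs (rsum (S N) (fun p => mpowv n H p x j / mu ^ p) - x j) <= xi.
Proof.
  intros Hmu Hinv Hxi.
  rewrite rsum_shift. simpl mpowv at 1.
  replace (x j / mu ^ 0 + _ - x j) with (rsum N (fun k => mpowv n H (S k) x j / mu ^ S k))
    by (simpl; field).
  eapply Rle_trans; [apply Rabs_rsum_le|].
  eapply Rle_trans; [|apply (partial_sum_le _ _ N Hxi), xi_term_nonneg].
  apply rsum_le. intros k _. unfold xi_term, Rdiv.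
  rewrite Rabs_mult, Rabs_inv, <- RPow_abs, <- pow_inv, Rmult_comm.
  apply Rmult_le_compat_r; [apply Rabs_pos|].
  apply pow_incr. split; [apply Rlt_le, Rinv_0_lt_compat, Hmu|exact Hinv].
Qed.

Lemma approx_combination_deviation m t (x z q : R) (c v e : nat -> R)
  (T : nat -> nat -> R) (rem : nat -> R) :
  (t < m)%nat -> 0 <= q < 1 ->
  (forall N, x = rsum m (fun s => c s * T N s) + rem N) ->
  (forall N s, Rabs (T N s - v s) <= e s) ->
  (forall N, Rabs (rem N) <= q ^ S N) ->
  Rabs (x - z * v t) <=
    Rabs (c t - z) * Rabs (v t) + Rabs (c t) * e t
    + rsum m (fun s => if Nat.eq_dec s t then 0 else Rabs (c s) * (Rabs (v s) + e s)).
Proof.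
  intros Ht Hq Hx HT Hrem. apply (le_of_le_plus_geometric _ _ q Hq). intros N.
  rewrite (Hx N), (rsum_split_at m _ t Ht).
  set (Soff := rsum m (fun s => if Nat.eq_dec s t then 0 else c s * T N s)).
  assert (HSoff : Rabs Soff <=
            rsum m (fun s => if Nat.eq_dec s t then 0 else Rabs (c s) * (Rabs (v s) + e s))).
  { eapply Rle_trans; [apply Rabs_rsum_le|]. apply rsum_le. intros s _.
    destruct (Nat.eq_dec s t); [rewrite Rabs_R0; lra|].
    rewrite Rabs_mult. apply Rmult_le_compat_l; [apply Rabs_pos|].
    replace (T N s) with (v s + (T N s - v s)) by ring.
    pose proof (Rabs_triang (v s) (T N s - v s)). pose proof (HT N s). lra. }
  replace (c t * T N t + Soff + rem N - z * v t)
    with ((c t - z) * v t + c t * (T N t - v t) + Soff + rem N) by ring.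
  pose proof (Rabs_triang ((c t - z) * v t + c t * (T N t - v t) + Soff) (rem N)).
  pose proof (Rabs_triang ((c t - z) * v t + c t * (T N t - v t)) Soff).
  pose proof (Rabs_triang ((c t - z) * v t) (c t * (T N t - v t))).
  rewrite !Rabs_mult in *.
  pose proof (Rmult_le_compat_l _ _ _ (Rabs_pos (c t)) (HT N t)).
  pose proof (Hrem N). lra.
Qed.

(** * The perturbed eigenvector *)

Section PerturbedEigenvector.

Variables (n : nat) (P H : nat -> nat -> R) (lam : nat -> R) (u : nat -> nat -> R).
Variables (h mu : R) (w : nat -> R).
Hypotheses (HP : symmetric n P) (Hu : orthonormal n u)
  (HPu : forall s i, (s < n)%nat -> (i < n)%nat -> mv n P (u s) i = lam s * u s i)
  (HH : is_spectral_norm n H h) (Hw : dot n w w = 1)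
  (HAw : forall i, (i < n)%nat -> mv n P w i + mv n H w i = mu * w i).

Lemma perturbation_norm_nonneg : 0 <= h.
Proof. exact (proj1 (spectral_norm_unit_bound n H h HH w Hw)). Qed.

Lemma coef_sq_sum : rsum n (fun s => dot n (u s) w ^ 2) = 1.
Proof. rewrite <- Hw, (parseval n u Hu). apply rsum_ext. intros; ring. Qed.

Lemma Rabs_coef_le1 s : (s < n)%nat -> Rabs (dot n (u s) w) <= 1.
Proof.
  intros Hs. apply Rabs_le_of_sq_le; [|lra]. rewrite pow1, <- coef_sq_sum.
  apply (rsum_term_le n (fun s => dot n (u s) w ^ 2)); [intros; apply pow2_ge_0|exact Hs].
Qed.

Lemma coef_mv s : (s < n)%nat -> dot n (u s) (mv n P w) = lam s * dot n (u s) w.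
Proof.
  intros Hs.
  rewrite (mv_symmetric n P (u s) w HP), (dot_ext n _ w (fun l => lam s * u s l) w)
    by (auto || reflexivity).
  now rewrite dot_comm, dot_scal_r, dot_comm.
Qed.

(* [u_s . H w = (mu - lam s) (u_s . w)], so Parseval bounds these by [|H w| <= h]. *)
Lemma coef_residual_sq_sum : rsum n (fun s => ((mu - lam s) * dot n (u s) w) ^ 2) <= h ^ 2.
Proof.
  pose proof (spectral_norm_sq_bound n H h HH w) as HB.
  rewrite Hw, Rmult_1_r, (parseval n u Hu) in HB. eapply Rle_trans; [|exact HB].
  right. apply rsum_ext. intros s Hs.
  assert (Hsum : dot n (u s) (fun l => mv n P w l + mv n H w l) = mu * dot n (u s) w).
  { rewrite <- dot_scal_r. apply dot_ext; [reflexivity|exact HAw]. }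
  rewrite dot_plus_r, coef_mv in Hsum by assumption.
  replace (dot n (u s) (mv n H w)) with ((mu - lam s) * dot n (u s) w) by lra. ring.
Qed.

Lemma coef_residual_le s : (s < n)%nat -> Rabs (mu - lam s) * Rabs (dot n (u s) w) <= h.
Proof.
  intros Hs. pose proof perturbation_norm_nonneg.
  rewrite <- Rabs_mult. apply Rabs_le_of_sq_le; [|assumption].
  eapply Rle_trans; [|apply coef_residual_sq_sum].
  apply (rsum_term_le n (fun s => ((mu - lam s) * dot n (u s) w) ^ 2));
    [intros; apply pow2_ge_0|exact Hs].
Qed.

Lemma neumann_expansion N j : mu <> 0 -> (j < n)%nat ->
  w j = rsum (S N) (fun p => mpowv n H p (mv n P w) j / mu ^ S p)
        + mpowv n H (S N) w j / mu ^ S N.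
Proof.
  intros Hmu Hj.
  assert (Hstep : forall p k, (k < n)%nat ->
            mpowv n H p w k = mpowv n H p (mv n P w) k / mu + mpowv n H (S p) w k / mu).
  { intros p k Hk.
    rewrite (mpowv_ext n H p w (fun l => / mu * mv n P w l + / mu * mv n H w l)) by
      (assumption || intros; rewrite <- Rmult_plus_distr_l, HAw by assumption; field; assumption).
    rewrite mpowv_lincomb, mpowv_mv. simpl. unfold Rdiv. ring. }
  induction N as [|N IH].
  - rewrite (Hstep 0%nat j Hj) at 1. simpl. field. assumption.
  - rewrite IH. change (rsum (S (S N)) ?f) with (rsum (S N) f + f (S N)).
    rewrite (Hstep (S N) j Hj). rewrite <- !tech_pow_Rmult. field.
    auto using pow_nonzero.
Qed.

Lemma eigenbasis_neumann_expansion N j : mu <> 0 -> (j < n)%nat ->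
  w j = rsum n (fun s => lam s * dot n (u s) w / mu
                         * rsum (S N) (fun p => mpowv n H p (u s) j / mu ^ p))
        + mpowv n H (S N) w j / mu ^ S N.
Proof.
  intros Hmu Hj. rewrite (neumann_expansion N j Hmu Hj) at 1. f_equal.
  assert (HPw : forall p, mpowv n H p (mv n P w) j
                          = rsum n (fun s => lam s * dot n (u s) w * mpowv n H p (u s) j)).
  { intros p. rewrite <- mpowv_rsum. apply mpowv_ext; [|exact Hj]. intros l Hl.
    rewrite (orthonormal_expansion n u Hu (mv n P w) l Hl).
    apply rsum_ext. intros. now rewrite coef_mv. }
  rewrite (rsum_ext _ _ (fun p => rsum n (fun s => lam s * dot n (u s) w / mu
                                                  * (mpowv n H p (u s) j / mu ^ p)))).
  - rewrite rsum_comm. apply rsum_ext. intros. now rewrite rsum_scal_l.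
  - intros p _. rewrite HPw. unfold Rdiv. rewrite <- rsum_scal_r.
    apply rsum_ext. intros. simpl. rewrite Rinv_mult. ring.
Qed.

Lemma neumann_remainder_le N j : mu <> 0 -> (j < n)%nat ->
  Rabs (mpowv n H (S N) w j / mu ^ S N) <= (h / Rabs mu) ^ S N.
Proof.
  intros Hmu Hj. pose proof perturbation_norm_nonneg as Hh.
  unfold Rdiv. rewrite Rabs_mult, Rabs_inv, <- RPow_abs, Rpow_mult_distr, pow_inv.
  apply Rmult_le_compat_r; [apply Rlt_le, Rinv_0_lt_compat, pow_lt, Rabs_pos_lt, Hmu|].
  eapply Rle_trans; [apply Rabs_entry_le_vnorm, Hj|]. unfold vnorm.
  rewrite <- (sqrt_pow2 (h ^ S N)) by (apply pow_le, Hh).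
  apply sqrt_le_1_alt. rewrite <- pow_mult, Nat.mul_comm.
  pose proof (mpowv_sq_bound n H h HH (S N) w) as Hpow. rewrite Hw, Rmult_1_r in Hpow.
  exact Hpow.
Qed.

Variables (t : nat) (Delta : R).
Hypotheses (Ht : (t < n)%nat) (HD : 0 < Delta)
  (Hsep : forall s, (s < n)%nat -> s <> t -> Delta <= Rabs (lam t - lam s))
  (Hweyl : Rabs (mu - lam t) <= h) (Hsmall : 2 * h < Rabs (lam t)).

Lemma eigenvalue_gap s : (s < n)%nat -> s <> t -> Delta - h <= Rabs (mu - lam s).
Proof.
  intros Hs Hst. pose proof (Hsep s Hs Hst).
  pose proof (Rabs_triang_inv (lam t - lam s) (lam t - mu)).
  replace (lam t - lam s - (lam t - mu)) with (mu - lam s) in * by ring.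
  rewrite <- Rabs_Ropp in Hweyl. replace (- (mu - lam t)) with (lam t - mu) in Hweyl by ring.
  lra.
Qed.

Lemma coef_off_target_le s : (s < n)%nat -> s <> t -> Rabs (dot n (u s) w) <= 2 * h / Delta.
Proof.
  intros Hs Hst. pose proof (Rabs_coef_le1 s Hs). pose proof (coef_residual_le s Hs).
  pose proof (eigenvalue_gap s Hs Hst). pose proof (Rabs_pos (dot n (u s) w)).
  apply Rmult_le_reg_l with Delta; [exact HD|]. field_simplify; [|lra].
  destruct (Rlt_le_dec (2 * h) Delta); nra.
Qed.

(* The mass [1 - (u_t . w)^2 = sum_(s <> t) (u_s . w)^2] sits on eigenvalues at
   distance at least [Delta / 2] from [mu]. *)
Lemma coef_on_target_ge : 1 - Rabs (dot n (u t) w) <= 4 * h ^ 2 / Delta ^ 2.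
Proof.
  assert (Hmass : 1 - dot n (u t) w ^ 2
                  = rsum n (fun s => if Nat.eq_dec s t then 0 else dot n (u s) w ^ 2)).
  { rewrite <- coef_sq_sum, (rsum_split_at n _ t Ht). ring. }
  assert (1 - Rabs (dot n (u t) w) <= 1 - dot n (u t) w ^ 2).
  { pose proof (Rabs_coef_le1 t Ht). pose proof (Rabs_pos (dot n (u t) w)).
    rewrite <- (pow2_abs (dot n (u t) w)). nra. }
  enough (1 - dot n (u t) w ^ 2 <= 4 * h ^ 2 / Delta ^ 2) by lra.
  destruct (Rlt_le_dec (2 * h) Delta) as [Hlt|Hge].
  - rewrite Hmass. apply Rmult_le_reg_l with (Delta ^ 2 / 4); [nra|].
    rewrite <- rsum_scal_l.
    replace (Delta ^ 2 / 4 * (4 * h ^ 2 / Delta ^ 2)) with (h ^ 2) by (field; lra).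
    eapply Rle_trans; [|apply coef_residual_sq_sum].
    rewrite (rsum_split_at n (fun s => ((mu - lam s) * dot n (u s) w) ^ 2) t Ht).
    pose proof (pow2_ge_0 ((mu - lam t) * dot n (u t) w)).
    enough (rsum n (fun s => Delta ^ 2 / 4 * (if Nat.eq_dec s t then 0 else dot n (u s) w ^ 2))
            <= rsum n (fun s => if Nat.eq_dec s t then 0 else ((mu - lam s) * dot n (u s) w) ^ 2))
      by lra.
    apply rsum_le. intros s Hs. destruct (Nat.eq_dec s t) as [|Hst]; [lra|].
    pose proof (eigenvalue_gap s Hs Hst).
    rewrite Rpow_mult_distr, <- (pow2_abs (mu - lam s)).
    apply Rmult_le_compat_r; [apply pow2_ge_0|].
    replace (Delta ^ 2 / 4) with ((Delta / 2) ^ 2) by field. apply pow_incr. lra.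
  - pose proof (pow2_ge_0 (dot n (u t) w)). apply Rle_trans with 1; [lra|].
    apply Rmult_le_reg_l with (Delta ^ 2); [nra|]. field_simplify; nra.
Qed.

Lemma Rabs_mu_gt : Rabs (lam t) / 2 < Rabs mu.
Proof.
  pose proof (Rabs_triang_inv (lam t) (lam t - mu)).
  replace (lam t - (lam t - mu)) with mu in * by ring.
  rewrite <- Rabs_Ropp in Hweyl. replace (- (mu - lam t)) with (lam t - mu) in Hweyl by ring.
  lra.
Qed.

Lemma Rinv_Rabs_mu_le : / Rabs mu <= 2 / Rabs (lam t).
Proof.
  pose proof Rabs_mu_gt. pose proof perturbation_norm_nonneg.
  apply Rmult_le_reg_l with (Rabs mu); [lra|]. rewrite Rinv_r by lra.
  apply Rmult_le_reg_l with (Rabs (lam t)); [lra|]. field_simplify; lra.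
Qed.

Lemma eigenvalue_ratio_deviation : Rabs (lam t / mu - 1) <= 2 * h / Rabs (lam t).
Proof.
  pose proof Rabs_mu_gt. pose proof perturbation_norm_nonneg.
  assert (Hmu0 : mu <> 0) by (intros E; rewrite E, Rabs_R0 in *; lra).
  replace (lam t / mu - 1) with (- (mu - lam t) * / mu) by (field; exact Hmu0).
  rewrite Rabs_mult, Rabs_Ropp, Rabs_inv.
  replace (2 * h / Rabs (lam t)) with (h * (2 / Rabs (lam t))) by (unfold Rdiv; ring).
  apply Rmult_le_compat; [apply Rabs_pos|apply Rlt_le, Rinv_0_lt_compat; lra|exact Hweyl|].
  apply Rinv_Rabs_mu_le.
Qed.

Lemma scaled_coef_on_target_le : Rabs (lam t * dot n (u t) w / mu) <= 2.
Proof.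
  pose proof Rinv_Rabs_mu_le. pose proof Rabs_mu_gt. pose proof perturbation_norm_nonneg.
  pose proof (Rabs_coef_le1 t Ht). pose proof (Rabs_pos (dot n (u t) w)).
  unfold Rdiv. rewrite !Rabs_mult, Rabs_inv.
  assert (Hratio : Rabs (lam t) * / Rabs mu <= 2).
  { replace 2 with (Rabs (lam t) * (2 / Rabs (lam t))) by (field; lra).
    apply Rmult_le_compat_l; [apply Rabs_pos|assumption]. }
  assert (0 <= Rabs (lam t) * / Rabs mu)
    by (apply Rmult_le_pos; [apply Rabs_pos|apply Rlt_le, Rinv_0_lt_compat; lra]).
  nra.
Qed.

(* This gives [4 h / Delta]; the statement's extra factor [sqrt 2 >= 1] is slack. *)
Lemma scaled_coef_off_target_le s : (s < n)%nat -> s <> t ->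
  Rabs (lam s * dot n (u s) w / mu) <= 4 * sqrt 2 * h / Delta * Rabs (lam s / lam t).
Proof.
  intros Hs Hst. pose proof Rinv_Rabs_mu_le. pose proof Rabs_mu_gt.
  pose proof perturbation_norm_nonneg. pose proof (coef_off_target_le s Hs Hst).
  pose proof (Rabs_pos (dot n (u s) w)). pose proof (Rabs_pos (lam s)).
  assert (1 <= sqrt 2) by (rewrite <- sqrt_1; apply sqrt_le_1_alt; lra).
  unfold Rdiv. rewrite !Rabs_mult, !Rabs_inv.
  apply Rle_trans with (Rabs (lam s) * (2 * h / Delta) * (2 / Rabs (lam t))).
  - apply Rmult_le_compat; [nra|apply Rlt_le, Rinv_0_lt_compat; lra|
                            apply Rmult_le_compat_l; lra|assumption].
  - assert (0 <= Rabs (lam s) * h * / Delta * / Rabs (lam t)).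
    { repeat apply Rmult_le_pos; try apply Rlt_le, Rinv_0_lt_compat; lra. }
    unfold Rdiv. nra.
Qed.

Lemma scaled_coef_sign : exists z, (z = 1 \/ z = -1) /\
  Rabs (lam t * dot n (u t) w / mu - z) <= 4 * h ^ 2 / Delta ^ 2 + 2 * h / Rabs (lam t).
Proof.
  pose proof eigenvalue_ratio_deviation. pose proof coef_on_target_ge.
  pose proof (Rabs_coef_le1 t Ht). pose proof (Rabs_pos (lam t / mu - 1)).
  set (a := dot n (u t) w) in *.
  assert (Hmu0 : mu <> 0) by (pose proof Rabs_mu_gt; intros E; rewrite E, Rabs_R0 in *;
                              pose proof (Rabs_pos (lam t)); lra).
  exists (if Rle_dec 0 a then 1 else -1).
  destruct (Rle_dec 0 a) as [Ha|Ha]; split; auto.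
  - rewrite Rabs_pos_eq in * by assumption.
    replace (lam t * a / mu - 1) with ((lam t / mu - 1) * a + (a - 1)) by (field; assumption).
    eapply Rle_trans; [apply Rabs_triang|].
    rewrite Rabs_mult, (Rabs_pos_eq a), (Rabs_left1 (a - 1)) by lra. nra.
  - rewrite Rabs_left in * by lra.
    replace (lam t * a / mu - -1) with ((lam t / mu - 1) * a + (a + 1)) by (field; assumption).
    eapply Rle_trans; [apply Rabs_triang|].
    rewrite Rabs_mult, (Rabs_left a), (Rabs_pos_eq (a + 1)) by lra. nra.
Qed.

Lemma entry_deviation_le (xi : nat -> R) z j : (j < n)%nat ->
  (forall s, infinite_sum (xi_term n H (lam t) (u s) j) (xi s)) ->
  Rabs (w j - z * u t j) <=
    Rabs (lam t * dot n (u t) w / mu - z) * Rabs (u t j)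
    + Rabs (lam t * dot n (u t) w / mu) * xi t
    + rsum n (fun s => if Nat.eq_dec s t then 0
                       else Rabs (lam s * dot n (u s) w / mu) * (Rabs (u s j) + xi s)).
Proof.
  intros Hj Hxi. pose proof Rabs_mu_gt. pose proof perturbation_norm_nonneg.
  assert (Hmu0 : mu <> 0) by (intros E; rewrite E, Rabs_R0 in *; lra).
  apply (approx_combination_deviation n t (w j) z (h / Rabs mu)
           (fun s => lam s * dot n (u s) w / mu) (fun s => u s j) xi
           (fun N s => rsum (S N) (fun p => mpowv n H p (u s) j / mu ^ p))
           (fun N => mpowv n H (S N) w j / mu ^ S N)).
  - exact Ht.
  - split; [apply Rmult_le_pos; [lra|apply Rlt_le, Rinv_0_lt_compat; lra]|].
    apply Rmult_lt_reg_r with (Rabs mu); [lra|]. unfold Rdiv.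
    rewrite Rmult_assoc, Rinv_l by lra. lra.
  - intros N. now apply eigenbasis_neumann_expansion.
  - intros N s. apply (neumann_partial_sum_deviation n H (lam t)); [lra|apply Rinv_Rabs_mu_le|apply Hxi].
  - intros N. now apply neumann_remainder_le.
Qed.

Lemma perturbed_eigenvector_entry_bound (xi : nat -> R) j : (j < n)%nat ->
  (forall s, infinite_sum (xi_term n H (lam t) (u s) j) (xi s)) ->
  exists z, (z = 1 \/ z = -1) /\
    Rabs (w j - z * u t j) <=
      (4 * h ^ 2 / Delta ^ 2 + 2 * h / Rabs (lam t)) * Rabs (u t j) + 2 * xi t
      + 4 * sqrt 2 * h / Delta *
        rsum n (fun s => if Nat.eq_dec s t then 0
                         else Rabs (lam s / lam t) * (Rabs (u s j) + xi s)).
Proof.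
  intros Hj Hxi. destruct scaled_coef_sign as [z [Hz Hzb]].
  exists z. split; [exact Hz|].
  eapply Rle_trans; [apply (entry_deviation_le xi z j Hj Hxi)|].
  pose proof (Rmult_le_compat_r _ _ _ (Rabs_pos (u t j)) Hzb).
  pose proof (Rmult_le_compat_r _ _ _ (xi_nonneg _ _ _ _ _ _ (Hxi t)) scaled_coef_on_target_le).
  rewrite <- rsum_scal_l.
  enough (rsum n (fun s => if Nat.eq_dec s t then 0
                  else Rabs (lam s * dot n (u s) w / mu) * (Rabs (u s j) + xi s))
          <= rsum n (fun s => 4 * sqrt 2 * h / Delta *
               (if Nat.eq_dec s t then 0 else Rabs (lam s / lam t) * (Rabs (u s j) + xi s))))
    by lra.
  apply rsum_le. intros s Hs. destruct (Nat.eq_dec s t) as [|Hst]; [lra|].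
  rewrite <- Rmult_assoc. apply Rmult_le_compat_r.
  - pose proof (Rabs_pos (u s j)). pose proof (xi_nonneg _ _ _ _ _ _ (Hxi s)). lra.
  - now apply scaled_coef_off_target_le.
Qed.

End PerturbedEigenvector.

Theorem lemmaB2 (n : nat) (P H : nat -> nat -> R)
  (lam : nat -> R) (u : nat -> nat -> R)
  (lamt : nat -> R) (ut : nat -> nat -> R)
  (t : nat) (Delta normH : R) (xi : nat -> nat -> R) :
  symmetric n P ->
  symmetric n H ->
  ordered_eigendecomp n P lam u ->
  ordered_eigendecomp n (fun i j => P i j + H i j) lamt ut ->
  (t < n)%nat ->
  (forall s, (s < n)%nat -> s <> t -> lam s <> lam t) ->
  (forall s, (s < n)%nat -> s <> t -> Delta <= Rabs (lam t - lam s)) ->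
  (exists s, (s < n)%nat /\ s <> t /\ Delta = Rabs (lam t - lam s)) ->
  is_spectral_norm n H normH ->
  normH < Rabs (lam t) / 2 ->
  (forall s j, infinite_sum (xi_term n H (lam t) (u s) j) (xi s j)) ->
  forall j, (j < n)%nat ->
    Rmin (Rabs (ut t j - 1 * u t j)) (Rabs (ut t j - (-1) * u t j)) <=
      (4 * normH ^ 2 / Delta ^ 2 + 2 * normH / Rabs (lam t)) * Rabs (u t j)
      + 2 * xi t j
      + 4 * sqrt 2 * normH / Delta *
        rsum n (fun s => if Nat.eq_dec s t then 0
                         else Rabs (lam s / lam t) * (Rabs (u s j) + xi s j)).
Proof.
  intros HP _ HPd HAd Ht Hsimple Hsep [s0 [Hs0 [Hs0t HD]]] HH Hsmall Hxi j Hj.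
  pose proof HPd as [_ [Hu HPu]]. pose proof HAd as [_ [Hut HAu]].
  assert (Hw : dot n (ut t) (ut t) = 1)
    by (rewrite Hut by assumption; destruct (Nat.eq_dec t t); congruence).
  assert (HAw : forall i, (i < n)%nat -> mv n P (ut t) i + mv n H (ut t) i = lamt t * ut t i)
    by (intros; rewrite <- mv_plus_matrix; auto).
  pose proof (perturbation_norm_nonneg n H normH (ut t) HH Hw) as Hh.
  pose proof (weyl_perturbation n P H normH lam u lamt ut t HPd HAd HH Hh Ht) as Hweyl.
  assert (HD0 : 0 < Delta).
  { rewrite HD. apply Rabs_pos_lt, Rminus_eq_contra, not_eq_sym. now apply Hsimple. }
  destruct (perturbed_eigenvector_entry_bound n P H lam u normH (lamt t) (ut t)
              HP Hu HPu HH Hw HAw t Delta Ht HD0 Hsep Hweyl ltac:(lra)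
              (fun s => xi s j) j Hj (fun s => Hxi s j)) as [z [[-> | ->] Hbound]].
  - eapply Rle_trans; [apply Rmin_l|exact Hbound].
  - eapply Rle_trans; [apply Rmin_r|exact Hbound].
Qed.
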